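(* Elements of $\mathcal{L}_s$ are compared as follows: for all finite $E, F \subseteq \mathcal{X}$, variables $x, y$ and $S, K \in \mathbb{N}$ such that the sublevels involved belong to $\mathcal{L}_s$, (1) $A(E, x, S) \not\leqslant_{\mathcal{L}} B(F, K)$; (2) $B(E, S) \leqslant_{\mathcal{L}} B(F, K) \iff F \subseteq E \land S \leqslant K$; (3) $B(E, S) \leqslant_{\mathcal{L}} A(F, x, K) \iff F \subseteq E \land S \leqslant K + 1$; (4) $A(E, x, S) \leqslant_{\mathcal{L}} A(F, y, K) \iff F \subseteq E \land x = y \land S \leqslant K$.
   Context: $\mathcal{X}$ is a countable set of variables; a valuation is $\sigma\colon\mathcal{X}\to\mathbb{N}$. For finite $E\subseteq\mathcal{X}$, $x\in\mathcal{X}$, $S\in\mathbb{N}$, the sublevels $A(E,x,S)$ and $B(E,S)$ have values $[A(E,x,S)]_\sigma = 0$ if some $y\in E$ has $\sigma(y)=0$, and $\sigma(x)+S$ otherwise; $[B(E,S)]_\sigma=0$ if some $y\in E$ has $\sigma(y)=0$, and $S$ otherwise. $\mathcal{L}_s$ is the set of sublevels $A(E,x,S)$ with $x \in E$ and $B(E,S)$ with $S>0$. For such expressions, $t_1 \leqslant_{\mathcal{L}} t_2$ means $[t_1]_\sigma \le [t_2]_\sigma$ for every valuation $\sigma$. *)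

From HB Require Import structures.
From mathcomp Require Import all_boot.
From mathcomp Require Import finmap.
Set Implicit Arguments. Unset Strict Implicit. Unset Printing Implicit Defensive.


Inductive sublevel (X : countType) : Type :=
| SA : {fset X} -> X -> nat -> sublevel X
| SB : {fset X} -> nat -> sublevel X.

Definition sl_val (X : countType) (sigma : X -> nat) (t : sublevel X) : nat :=
  match t with
  | SA E x s => if [exists y : E, sigma (val y) == 0] then 0 else sigma x + s
  | SB E s => if [exists y : E, sigma (val y) == 0] then 0 else s
  end.

Definition in_Ls (X : countType) (t : sublevel X) : Prop :=
  match t with
  | SA E x _ => x \in E
  | SB _ s => 0 < s
  end.

Definition leL (X : countType) (t1 t2 : sublevel X) : Prop :=
  forall sigma : X -> nat, sl_val sigma t1 <= sl_val sigma t2.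

From HB Require Import structures.
From mathcomp Require Import all_boot.
From mathcomp Require Import finmap.
Set Implicit Arguments. Unset Strict Implicit. Unset Printing Implicit Defensive.
Local Open Scope fset_scope.

(* Every sublevel is "0 if sigma vanishes on its guard set, its body otherwise",
   and a sublevel of L_s is positive whenever its guard does not vanish.  Hence
   the valuation vanishing only at some f in F \ E separates t1 from t2 unless
   the guard F of t2 is contained in the guard E of t1.  Valuations that are
   positive everywhere see only the bodies: constants compare S with K (or with
   K + 1 when the body sigma x + K has sigma = 1), and a valuation that is large
   at x and 1 elsewhere separates A(E, x, S) from A(F, y, K) when x <> y.
   Conversely, once F is contained in E, it suffices to compare bodies where
   sigma does not vanish on E, where sigma x >= 1 for every x in E. *)

Section Sublevels.

Variable X : countType.
Implicit Types (E F : {fset X}) (sigma : X -> nat) (t : sublevel X).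

Definition vanishes sigma E := [exists y : E, sigma (val y) == 0].

Lemma vanishesP sigma E :
  reflect (exists2 y, y \in E & sigma y = 0) (vanishes sigma E).
Proof.
apply: (iffP existsP) => [[y /eqP y0] | [y yE y0]].
  by exists (val y); first exact: valP.
by exists [` yE]; apply/eqP.
Qed.

Lemma vanishes_fsubset sigma E F :
  F `<=` E -> vanishes sigma F -> vanishes sigma E.
Proof.
by move=> /fsubsetP FE /vanishesP [y /FE yE y0]; apply/vanishesP; exists y.
Qed.

Lemma nvanishes_gt0 sigma E y : ~~ vanishes sigma E -> y \in E -> 0 < sigma y.
Proof.
by move=> /vanishesP nvan yE; rewrite lt0n; apply/eqP => y0; apply: nvan; exists y.
Qed.

Lemma nvanishes_pos sigma E : (forall z, 0 < sigma z) -> ~~ vanishes sigma E.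
Proof.
by move=> sigma_gt0; apply/vanishesP => -[z _ z0]; have := sigma_gt0 z; rewrite z0.
Qed.

Definition zero_at (f : X) : X -> nat := fun z => if z == f then 0 else 1.

Lemma vanishes_zero_at f E : vanishes (zero_at f) E = (f \in E).
Proof.
apply/vanishesP/idP => [[y yE] | fE]; last by exists f; rewrite /zero_at ?eqxx.
by rewrite /zero_at; case: eqP => [<- | ].
Qed.

Definition sl_guard t : {fset X} := match t with SA E _ _ => E | SB E _ => E end.

Definition sl_body sigma t : nat :=
  match t with SA _ x s => sigma x + s | SB _ s => s end.

Lemma sl_valE sigma t :
  sl_val sigma t = if vanishes sigma (sl_guard t) then 0 else sl_body sigma t.
Proof. by case: t. Qed.

Lemma sl_val_pos sigma t :
  (forall z, 0 < sigma z) -> sl_val sigma t = sl_body sigma t.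
Proof.
by move=> sigma_gt0; rewrite sl_valE (negbTE (nvanishes_pos _ sigma_gt0)).
Qed.

Lemma sl_val_gt0 sigma t :
  in_Ls t -> ~~ vanishes sigma (sl_guard t) -> 0 < sl_val sigma t.
Proof.
move=> tLs nvan; rewrite sl_valE (negbTE nvan).
case: t tLs nvan => [E x s | E s] //= xE nvan.
by rewrite ltn_addr // (nvanishes_gt0 nvan).
Qed.

Lemma leL_fsubset t1 t2 : leL t1 t2 -> in_Ls t1 -> sl_guard t2 `<=` sl_guard t1.
Proof.
move=> le12 t1Ls; apply/fsubsetP => f fG2; apply/negPn/negP => fG1.
have t1_gt0 : 0 < sl_val (zero_at f) t1.
  by apply: sl_val_gt0; rewrite ?vanishes_zero_at.
have := le12 (zero_at f).
by rewrite [sl_val _ t2]sl_valE vanishes_zero_at fG2 leqNgt t1_gt0.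
Qed.

Lemma leL_body t1 t2 :
  sl_guard t2 `<=` sl_guard t1 ->
  (forall sigma, ~~ vanishes sigma (sl_guard t1) ->
     sl_body sigma t1 <= sl_body sigma t2) ->
  leL t1 t2.
Proof.
move=> G21 le_body sigma; rewrite !sl_valE.
case: (boolP (vanishes _ _)) => // nvan1.
by rewrite (contraNF (vanishes_fsubset G21)) // le_body.
Qed.

Lemma nleL_SA_SB E F x S K : ~ leL (SA E x S) (SB F K).
Proof.
by move=> /(_ (fun=> K.+1)); rewrite !sl_val_pos //= addSn ltnNge leq_addr.
Qed.

Lemma leL_SB_SB E F S K :
  0 < S -> leL (SB E S) (SB F K) <-> F `<=` E /\ S <= K.
Proof.
move=> S_gt0; split=> [le12 | [FE SK]].
  split; first exact: (leL_fsubset le12 S_gt0).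
  by have := le12 (fun=> 1); rewrite !sl_val_pos.
exact: leL_body.
Qed.

Lemma leL_SB_SA E F x S K :
  0 < S -> x \in F -> leL (SB E S) (SA F x K) <-> F `<=` E /\ S <= K + 1.
Proof.
move=> S_gt0 xF; split=> [le12 | [FE SK]].
  split; first exact: (leL_fsubset le12 S_gt0).
  by have := le12 (fun=> 1); rewrite !sl_val_pos //= addnC.
apply: leL_body => // sigma nvan /=.
apply: (leq_trans SK); rewrite addn1 -add1n leq_add2r.
exact: nvanishes_gt0 nvan (fsubsetP FE x xF).
Qed.

Lemma leL_SA_SA E F x y S K :
  x \in E -> leL (SA E x S) (SA F y K) <-> F `<=` E /\ x = y /\ S <= K.
Proof.
move=> xE; split=> [le12 | [FE [<- SK]]]; last first.
  by apply: leL_body => // sigma _ /=; rewrite leq_add2l.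
split; first exact: (leL_fsubset le12 xE).
split; last by have := le12 (fun=> 1); rewrite !sl_val_pos //= leq_add2l.
apply/eqP; apply: contraT => neq_xy.
pose sigma z := if z == x then K.+2 else 1.
have sigma_gt0 z : 0 < sigma z by rewrite /sigma; case: ifP.
have := le12 sigma; rewrite !sl_val_pos //= /sigma eqxx eq_sym (negbTE neq_xy).
by rewrite add1n addSn ltnNge leq_addr.
Qed.

End Sublevels.

Theorem theorem29 (X : countType) (E F : {fset X}) (x y : X) (S K : nat) :
  (in_Ls (SA E x S) -> in_Ls (SB F K) -> ~ leL (SA E x S) (SB F K)) /\
  (in_Ls (SB E S) -> in_Ls (SB F K) ->
     (leL (SB E S) (SB F K) <-> (F `<=` E /\ S <= K))) /\
  (in_Ls (SB E S) -> in_Ls (SA F x K) ->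
     (leL (SB E S) (SA F x K) <-> (F `<=` E /\ S <= K + 1))) /\
  (in_Ls (SA E x S) -> in_Ls (SA F y K) ->
     (leL (SA E x S) (SA F y K) <-> (F `<=` E /\ x = y /\ S <= K))).
Proof.
split; first by move=> _ _; apply: nleL_SA_SB.
split; first by move=> S_gt0 _; apply: leL_SB_SB.
split; first exact: leL_SB_SA.
by move=> xE _; apply: leL_SA_SA.
Qed.
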